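(* Let $H$ be a finite simple graph with $n=|V(H)|\ge 1$ vertices, chromatic number $\chi=\chi(H)$, and let $m'=m'(H)$ denote the number of non-edges of $H$. Then $$\left\lceil \frac{n}{\chi} \right\rceil \left( n - \frac{\chi}{2}\left\lceil\frac{n}{\chi}-1\right\rceil\right) \leq \rho(H) \leq n+m'.$$
   Context: All graphs are finite and simple. A coloring of a graph means a proper vertex coloring. An induced subgraph is rainbow if all its vertices receive pairwise different colors. For a graph $H$, $\rho(H)$ is the least number $m$ such that there exists a graph $G$ on $m$ vertices with the property that every proper vertex coloring of $G$ contains a rainbow induced subgraph isomorphic to $H$. A non-edge of $H$ is an unordered pair of distinct non-adjacent vertices of $H$. *)

From mathcomp Require Import all_boot all_order all_algebra.
Set Implicit Arguments. Unset Strict Implicit. Unset Printing Implicit Defensive.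

Definition simple_graph (T : finType) (e : rel T) : Prop :=
  (forall x, ~~ e x x) /\ (forall x y, e x y = e y x).

Definition proper_kcoloring (T : finType) (e : rel T) (k : nat) (c : T -> 'I_k) :=
  forall x y, e x y -> c x != c y.

Definition is_chromatic_number (T : finType) (e : rel T) (chi : nat) : Prop :=
  (exists c : T -> 'I_chi, proper_kcoloring e c) /\
  (forall k (c : T -> 'I_k), proper_kcoloring e c -> chi <= k).

Definition num_nonedges (T : finType) (e : rel T) : nat :=
  #|[set A : {set T} | (#|A| == 2) && [forall u in A, forall v in A, ~~ e u v]]|.

Definition proper_coloring (V : finType) (e : rel V) (c : V -> nat) :=
  forall x y, e x y -> c x != c y.

Definition has_rainbow_induced_copy (T V : finType) (eH : rel T) (eG : rel V)
  (c : V -> nat) : Prop :=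
  exists f : T -> V, injective f /\
    (forall u v, eG (f u) (f v) = eH u v) /\
    injective (fun u => c (f u)).

Definition rho_witness (T : finType) (eH : rel T) (m : nat) : Prop :=
  exists eG : rel 'I_m, simple_graph eG /\
    forall c : 'I_m -> nat, proper_coloring eG c -> has_rainbow_induced_copy eH eG c.

Definition is_rho (T : finType) (eH : rel T) (r : nat) : Prop :=
  rho_witness eH r /\ forall m, rho_witness eH m -> r <= m.

(* Upper bound: blow every vertex v of H up into a clique holding one vertex for v
   and one for each non-neighbour of v that precedes it in a fixed order; this graph
   has n + m' vertices.  Given a proper colouring, pick one vertex per clique along
   the order: the clique over v is larger than the set of earlier non-neighbours of v,
   and it is joined to the cliques of all neighbours of v, so some vertex of it avoids
   every colour picked so far.  The picked vertices induce a rainbow copy of H.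

   Lower bound: if every proper colouring of G[U] contains a rainbow induced copy of a
   j-vertex subgraph of H, then (colouring injectively) some colour class of a
   chi-colouring of H is mapped onto an independent set S of G of size >= ceil(j/chi),
   and U minus S has the same property for j - 1 (give S a single new colour).  Hence
   rho(H) >= sum_(i <= n) ceil(i/chi), which is the left-hand side in closed form. *)

From mathcomp Require Import all_boot all_order all_algebra zify ring.
From Stdlib Require Import Classical Wf_nat.
Set Implicit Arguments. Unset Strict Implicit. Unset Printing Implicit Defensive.

Definition ceildivn (n d : nat) : nat := (n + d.-1) %/ d.

Lemma ceildivn_bounds n d : 0 < d -> n <= d * ceildivn n d < n + d.
Proof.
move=> d_gt0; have := ltn_pmod (n + d.-1) d_gt0.
have := divn_eq (n + d.-1) d; rewrite /ceildivn mulnC.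
set q := _ %/ d; set r := _ %% d; lia.
Qed.

Lemma ceildivn_unique n d q : n <= d * q < n + d -> ceildivn n d = q.
Proof.
case/andP=> lo hi; have d_gt0 : 0 < d.
  by case: d lo hi => // lo hi; rewrite mul0n addn0 in hi; rewrite ltnNge lo in hi.
have /andP[lo' hi'] := ceildivn_bounds n d_gt0.
set c := ceildivn n d in lo' hi' *.
have le_cq : c <= q by rewrite -ltnS -(ltn_pmul2l d_gt0) mulnS; lia.
have le_qc : q <= c by rewrite -ltnS -(ltn_pmul2l d_gt0) mulnS; lia.
by apply/eqP; rewrite eqn_leq le_cq le_qc.
Qed.

Lemma ceildivn_leq n d m : 0 < d -> n <= d * m -> ceildivn n d <= m.
Proof.
move=> d_gt0 le_n; have /andP[_ hi] := ceildivn_bounds n d_gt0.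
by rewrite -ltnS -(ltn_pmul2l d_gt0) mulnS; lia.
Qed.

Lemma ceildivnS n d : 0 < d ->
  ceildivn n.+1 d = ceildivn n d + (d * ceildivn n d == n).
Proof.
move=> d_gt0; have /andP[lo hi] := ceildivn_bounds n d_gt0.
apply: ceildivn_unique; case: eqP => [eq_n|/eqP ne_n].
  by rewrite addn1 mulnS; lia.
by rewrite addn0; lia.
Qed.

Lemma sum_ceildivn n d : 0 < d ->
  2 * (\sum_(i < n) ceildivn i.+1 d) + d * ceildivn n d ^ 2
  = 2 * ceildivn n d * n + d * ceildivn n d.
Proof.
move=> d_gt0; elim: n => [|n IHn].
  by rewrite big_ord0 (@ceildivn_unique 0 d 0) ?muln0.
rewrite big_ord_recr /= ceildivnS //; set c := ceildivn n d in IHn *.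
move: (\sum_(i < n) _) IHn => S IHn; clearbody c.
case: eqP => [eq_n|_]; last by rewrite addn0; lia.
by move: IHn; rewrite -{}eq_n addn1; lia.
Qed.

Lemma exists_fresh_colour (V : finType) (c : V -> nat) (A : {set V}) (s : seq nat) :
  {in A &, injective c} -> size s < #|A| -> exists2 x, x \in A & c x \notin s.
Proof.
move=> inj_c lt_sA; apply/exists_inP; apply: contraLR lt_sA => /exists_inPn fresh.
rewrite -leqNgt cardE -(size_map c); apply: uniq_leq_size.
  by rewrite map_inj_in_uniq ?enum_uniq // => x y; rewrite !mem_enum; apply: inj_c.
by move=> z /mapP[x]; rewrite mem_enum => /fresh /negPn s_cx ->.
Qed.

Section NonedgeBlowup.

Variables (T : finType) (eH : rel T).
Hypothesis simple_eH : simple_graph eH.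

(* [(v, v)] stands for [v] itself, [(v, u)] for the non-edge [{u, v}] with [u] of
   smaller rank; the fibre over [v] is a clique. *)
Definition blowup_vertex (p : T * T) : bool :=
  (p.1 == p.2) || (enum_rank p.2 < enum_rank p.1) && ~~ eH p.1 p.2.

Local Notation blowup := {p : T * T | blowup_vertex p}.

Definition blowup_rel : rel blowup :=
  fun x y => ((val x).1 == (val y).1) && (x != y) || eH (val x).1 (val y).1.

Lemma blowup_simple : simple_graph blowup_rel.
Proof.
have [irr sym] := simple_eH; split=> [x|x y]; first by rewrite /blowup_rel !eqxx /= irr.
by rewrite /blowup_rel sym eq_sym [y == x]eq_sym.
Qed.

Lemma diag_blowup_vertex v : blowup_vertex (v, v).
Proof. by rewrite /blowup_vertex eqxx. Qed.

Definition blowup_fibre v := [set x : blowup | (val x).1 == v].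

Lemma card_blowup_fibre v :
  #|[set u | (enum_rank u < enum_rank v) && ~~ eH v u]| < #|blowup_fibre v|.
Proof.
set N := [set u | _]; have vN : v \notin N by rewrite inE ltnn.
have card_vN : #|v |: N| = #|N|.+1 by rewrite cardsU1 vN.
rewrite -card_vN; apply: leq_trans (leq_imset_card (fun x => (val x).2) _).
apply/subset_leq_card/subsetP => u; rewrite !inE => /orP[/eqP ->|uN].
  by apply/imsetP; exists (exist _ (v, v) (diag_blowup_vertex v)); rewrite ?inE.
have Pvu : blowup_vertex (v, u) by rewrite /blowup_vertex /= uN orbT.
by apply/imsetP; exists (exist _ (v, u) Pvu); rewrite ?inE.
Qed.

Lemma blowup_fibre_clique v : {in blowup_fibre v &, forall x y, x != y -> blowup_rel x y}.
Proof. by move=> x y; rewrite !inE /blowup_rel => /eqP -> /eqP -> ->; rewrite eqxx. Qed.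

Section Greedy.

Variable c : blowup -> nat.
Hypothesis proper_c : proper_coloring blowup_rel c.

Lemma blowup_greedy_step (g : T -> blowup) (v0 : T) :
  (forall v, (val (g v)).1 = v) ->
  {in [pred v : T | enum_rank v < enum_rank v0] &, injective (c \o g)} ->
  exists2 g' : T -> blowup, (forall v, (val (g' v)).1 = v) &
    {in [pred v : T | enum_rank v <= enum_rank v0] &, injective (c \o g')}.
Proof.
move=> gK inj_g.
set N := [set u | (enum_rank u < enum_rank v0) && ~~ eH v0 u].
have inj_fibre : {in blowup_fibre v0 &, injective c}.
  move=> x y fx fy eq_c; apply: contraTeq isT => /(blowup_fibre_clique fx fy).
  by move/proper_c; rewrite eq_c eqxx.
have size_s : size [seq c (g u) | u in N] < #|blowup_fibre v0|.
  by rewrite size_image card_blowup_fibre.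
have [x fibre_x fresh_x] := exists_fresh_colour inj_fibre size_s.
have x1 : (val x).1 = v0 by move: fibre_x; rewrite inE => /eqP.
have fresh : forall w, enum_rank w < enum_rank v0 -> c x != c (g w).
  move=> w lt_w; case: (boolP (eH v0 w)) => [e_v0w|ne_v0w].
    by apply: proper_c; rewrite /blowup_rel x1 gK e_v0w orbT.
  by apply: contra fresh_x => /eqP ->; apply: image_f; rewrite inE lt_w.
pose g' u := if u == v0 then x else g u.
exists g' => [v|u w]; first by rewrite /g'; case: eqP => [->|].
have lt_v0 y : enum_rank y <= enum_rank v0 -> y != v0 -> enum_rank y < enum_rank v0.
  rewrite ltn_neqAle => -> ne_y; rewrite andbT.
  by apply: contra ne_y => /eqP/val_inj/enum_rank_inj ->.
rewrite !inE /g' /=; case: eqP => [->|/eqP ne_u]; case: eqP => [->|/eqP ne_w] //.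
- by move=> _ /lt_v0 /(_ ne_w) /fresh /eqP.
- by move=> /lt_v0 /(_ ne_u) /fresh + _ eq_c; rewrite eq_c eqxx.
- by move=> /lt_v0 /(_ ne_u) ? /lt_v0 /(_ ne_w) ?; apply: inj_g; rewrite inE.
Qed.

Lemma blowup_greedy k : k <= #|T| ->
  exists2 g : T -> blowup, (forall v, (val (g v)).1 = v) &
    {in [pred v : T | enum_rank v < k] &, injective (c \o g)}.
Proof.
elim: k => [|k IHk] le_k.
  by exists (fun v => exist _ (v, v) (diag_blowup_vertex v)) => // u w; rewrite inE.
have [g gK inj_g] := IHk (ltnW le_k).
pose v0 := enum_val (Ordinal le_k : 'I_#|T|).
have rank_v0 : enum_rank v0 = k :> nat by rewrite enum_valK.
have [|g' g'K inj_g'] := @blowup_greedy_step g v0 gK.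
  by move=> u w; rewrite !inE rank_v0; apply: inj_g.
by exists g' => // u w; rewrite !inE !ltnS -rank_v0; apply: inj_g'.
Qed.

Lemma blowup_rainbow : has_rainbow_induced_copy eH blowup_rel c.
Proof.
have [g gK inj_g] := blowup_greedy (leqnn #|T|).
exists g; split; last split.
- by move=> u v /(congr1 (fun x => (val x).1)); rewrite !gK.
- move=> u v; rewrite /blowup_rel !gK; case: eqP => [->|] //=.
  by rewrite eqxx (negbTE (simple_eH.1 v)).
- by move=> u v; apply: inj_g; rewrite inE ltn_ord.
Qed.

End Greedy.

Lemma blowup_rank (x : blowup) : enum_rank (val x).2 <= enum_rank (val x).1.
Proof.
by case: x => [[a b]]; rewrite /blowup_vertex /= => /orP[/eqP -> //|/andP[/ltnW]].
Qed.

Definition blowup_ends (x : blowup) : {set T} := [set (val x).1; (val x).2].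

Lemma blowup_ends_inj : injective blowup_ends.
Proof.
move=> x y eq_xy; have := blowup_rank x; have := blowup_rank y.
case: x y eq_xy => [[a b] Pab] [[a' b'] Pab'] /=.
rewrite /blowup_ends /= => eq_ab le_b'a' le_ba.
have in_ab z : (z \in [set a; b]) = (z \in [set a'; b']) by rewrite eq_ab.
have aa' : a = a'.
  apply: enum_rank_inj; apply: val_inj; apply/eqP; rewrite eqn_leq.
  have := in_ab a; rewrite !inE eqxx /= => /esym a_in.
  have := in_ab a'; rewrite !inE eqxx /= => a'_in.
  by apply/andP; split; [case/orP: a_in | case/orP: a'_in] => /eqP ->.
subst a'; apply: val_inj => /=; congr (_, _).
have := in_ab b; rewrite !inE eqxx orbT => /esym/orP[/eqP ba|/eqP -> //].
by have := in_ab b'; rewrite !inE eqxx orbT ba orbb => /eqP ->.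
Qed.

Lemma card_blowup : #|{: blowup}| <= #|T| + num_nonedges eH.
Proof.
have [irr sym] := simple_eH.
pose E := [set A : {set T} | (#|A| == 2) && [forall u in A, forall v in A, ~~ eH u v]].
have endsE :
    [set blowup_ends x | x in [set: blowup]] \subset [set [set v] | v : T] :|: E.
  apply/subsetP => _ /imsetP[[[a b] Pab] _ ->]; rewrite /blowup_ends /= !inE.
  case: (eqVneq a b) => [->|ne_ab]; first by rewrite setUid imset_f.
  move: Pab; rewrite /blowup_vertex /= (negbTE ne_ab) /= => /andP[_ ne_eab].
  rewrite cards2 ne_ab /=; apply/orP; right.
  apply/forall_inP=> u u_ab; apply/forall_inP=> v v_ab.
  by move: u_ab v_ab; rewrite !inE => /orP[]/eqP-> /orP[]/eqP->; rewrite ?irr // sym.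
have -> : #|{: blowup}| = #|[set blowup_ends x | x in [set: blowup]]|.
  by rewrite (card_imset _ blowup_ends_inj) cardsT.
apply: leq_trans (subset_leq_card endsE) (leq_trans (leq_card_setU _ _) _).
by rewrite leq_add2r; apply: leq_imset_card.
Qed.

End NonedgeBlowup.

Lemma rho_witness_of_graph (T V : finType) (eH : rel T) (eV : rel V) m :
  simple_graph eV ->
  (forall c, proper_coloring eV c -> has_rainbow_induced_copy eH eV c) ->
  #|V| <= m -> rho_witness eH m.
Proof.
move=> [irr sym] rainbow le_Vm.
pose g v : 'I_m := widen_ord le_Vm (enum_rank v).
have inj_g : injective g by move=> v w /(congr1 val) /= /val_inj/enum_rank_inj.
pose eG i j := [exists v, exists w, (g v == i) && (g w == j) && eV v w].
have eG_g v w : eG (g v) (g w) = eV v w.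
  apply/existsP/idP => [[v' /existsP[w' /andP[/andP[/eqP/inj_g -> /eqP/inj_g ->]]]] //|e_vw].
  by exists v; apply/existsP; exists w; rewrite !eqxx.
exists eG; split.
  split=> [i|i j].
    apply/existsP => -[v /existsP[w /andP[/andP[/eqP gv /eqP gw]]]].
    by move: gv; rewrite -gw => /inj_g ->; rewrite (negbTE (irr w)).
  apply/existsP/existsP => -[v /existsP[w /andP[/andP[gv gw] e_vw]]];
  by exists w; apply/existsP; exists v; rewrite gv gw sym e_vw.
move=> c proper_c.
have [|f [inj_f [induced rainbow_f]]] := rainbow (fun v => c (g v)).
  by move=> v w e_vw; apply: proper_c; rewrite eG_g.
exists (g \o f); split; last split => //.
- exact: inj_comp inj_g inj_f.
- by move=> u v; rewrite /= eG_g induced.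
Qed.

Lemma rho_witness_nonedges (T : finType) (eH : rel T) :
  simple_graph eH -> rho_witness eH (#|T| + num_nonedges eH).
Proof.
move=> simple_eH; apply: rho_witness_of_graph (card_blowup simple_eH).
  exact: blowup_simple.
by move=> c; apply: blowup_rainbow.
Qed.

Lemma exists_is_rho (T : finType) (eH : rel T) m :
  rho_witness eH m -> exists r, is_rho eH r.
Proof.
move=> wit_m; have [r [[wit_r least_r] _]] :=
  @dec_inh_nat_subset_has_unique_least_element (rho_witness eH)
    (fun k => classic _) (ex_intro _ m wit_m).
by exists r; split=> // k /least_r /leP.
Qed.

Lemma exists_large_fibre (T : finType) k (kap : T -> 'I_k) (W : {set T}) :
  0 < k -> exists a : 'I_k, #|W| <= k * #|[set w in W | kap w == a]|.
Proof.
move=> k_gt0; pose F a := #|[set w in W | kap w == a]|.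
have [a _ max_a] := @arg_maxnP _ (Ordinal k_gt0) xpredT F isT.
exists a; have -> : #|W| = \sum_(b < k) F b.
  rewrite -sum1_card (partition_big kap xpredT) //=; apply: eq_bigr => b _.
  by rewrite /F -sum1_card; apply: eq_bigl => w; rewrite inE.
apply: (@leq_trans (\sum_(b < k) F a)); first by apply: leq_sum => b _; apply: max_a.
by rewrite sum_nat_const card_ord.
Qed.

Section RainbowForcing.

Variables (T V : finType) (eH : rel T) (eV : rel V).

Definition independent (S : {set V}) := [forall x in S, forall y in S, ~~ eV x y].

Definition forces_rainbow (U : {set V}) (j : nat) :=
  forall c : V -> nat, {in U &, forall x y, eV x y -> c x != c y} ->
  exists W : {set T}, exists f : T -> V,
    [/\ j <= #|W|, {in W, forall w, f w \in U},
        {in W &, forall u v, eV (f u) (f v) = eH u v} & {in W &, injective (c \o f)}].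

Lemma forces_rainbow_setT :
  (forall c, proper_coloring eV c -> has_rainbow_induced_copy eH eV c) ->
  forces_rainbow [set: V] #|T|.
Proof.
move=> rainbow c proper_c.
have [|f [_ [induced inj_cf]]] := rainbow c; first by move=> x y; apply: proper_c.
exists [set: T], f; split=> [|w _|u v _ _|u v _ _]; rewrite ?cardsT ?inE //.
exact: inj_cf.
Qed.

Lemma forces_rainbow_independent chi (kap : T -> 'I_chi) U j :
  proper_kcoloring eH kap -> 0 < chi -> (forall x, ~~ eV x x) ->
  forces_rainbow U j -> exists2 S : {set V}, S \subset U & independent S && (j <= chi * #|S|).
Proof.
move=> kap_proper chi_gt0 irr forces.
have [|W [f [le_jW fU induced inj_cf]]] := forces (fun x => enum_rank x).
  by move=> x y _ _ e_xy; apply: contraTneq e_xy => /val_inj/enum_rank_inj ->.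
have [a le_W] := exists_large_fibre kap W chi_gt0.
set Wa := [set w in W | kap w == a] in le_W.
have WaW : {subset Wa <= W} by move=> w; rewrite inE => /andP[].
exists (f @: Wa).
  by apply/subsetP => _ /imsetP[w /WaW /fU fw ->].
apply/andP; split.
  apply/forall_inP => _ /imsetP[u u_a ->]; apply/forall_inP => _ /imsetP[v v_a ->].
  rewrite induced ?WaW //; apply: contraL v_a => /kap_proper.
  by move: u_a; rewrite !inE => /andP[_ /eqP ->]; apply: contraNN => /andP[_ /eqP ->].
rewrite card_in_imset; first exact: leq_trans le_W.
by move=> u v /WaW u_W /WaW v_W eq_f; apply: inj_cf => //=; rewrite eq_f.
Qed.

(* Recolour [S] with one new colour: a rainbow copy meets [S] in at most one vertex. *)
Lemma forces_rainbow_setD U S j :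
  independent S -> forces_rainbow U j.+1 -> forces_rainbow (U :\: S) j.
Proof.
move=> /forall_inP indep_S forces c proper_c.
pose c' x := if x \in S then 0 else (c x).+1.
have [|W [f [le_jW fU induced inj_cf]]] := forces c'.
  move=> x y xU yU; rewrite /c'; case: ifP => [xS|/negbT xS]; case: ifP => [yS|/negbT yS] //.
  - by move: (indep_S x xS) => /forall_inP/(_ y yS)/negbTE ->.
  - by rewrite eqSS; apply: proper_c; rewrite inE ?xS ?yS.
have le1_S : #|W :&: f @^-1: S| <= 1.
  apply/card_le1_eqP => u v; rewrite !inE => /andP[uW uS] /andP[vW vS].
  by apply: inj_cf => //=; rewrite /c' uS vS.
exists (W :\: f @^-1: S), f; split.
- by move: le_jW; rewrite -(cardsID (f @^-1: S) W); lia.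
- by move=> w; rewrite !inE => /andP[-> /fU].
- by move=> u v; rewrite !inE => /andP[_ uW] /andP[_ vW]; apply: induced.
- move=> u v; rewrite !inE => /andP[uS uW] /andP[vS vW] eq_c.
  by apply: inj_cf => //=; rewrite /c' (negbTE uS) (negbTE vS); congr _.+1.
Qed.

Lemma forces_rainbow_card chi (kap : T -> 'I_chi) :
  proper_kcoloring eH kap -> 0 < chi -> (forall x, ~~ eV x x) ->
  forall j U, forces_rainbow U j -> \sum_(i < j) ceildivn i.+1 chi <= #|U|.
Proof.
move=> kap_proper chi_gt0 irr; elim=> [|j IHj] U forces; first by rewrite big_ord0.
have [S sub_SU /andP[indep_S le_jS]] :=
  forces_rainbow_independent kap_proper chi_gt0 irr forces.
rewrite big_ord_recr /= -(cardsID S U) (setIidPr sub_SU) addnC.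
apply: leq_add; first exact: ceildivn_leq chi_gt0 le_jS.
exact: IHj (forces_rainbow_setD indep_S forces).
Qed.

End RainbowForcing.

Import Order.TTheory GRing.Theory Num.Theory.
Local Open Scope ring_scope.

Lemma ceil_ratio (R : archiFieldType) n d : (0 < d)%N ->
  Num.ceil (n%:R / d%:R : R) = (ceildivn n d)%:Z.
Proof.
move=> d_gt0; have /andP[lo hi] := ceildivn_bounds n d_gt0.
have d_pos : 0 < d%:R :> R by rewrite ltr0n.
set q := ceildivn n d in lo hi *.
apply: ceil_def; rewrite intrB [q%:~R]/(q%:R) ler_pdivrMr // ltr_pdivlMr //.
rewrite mulrBl mul1r -!natrM mulnC ler_nat lo andbT ltrBlDr -natrD ltr_nat.
exact: hi.
Qed.

Lemma sum_ceildivnE (R : archiFieldType) n d : (0 < d)%N ->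
  (Num.ceil (n%:R / d%:R : R))%:~R
    * (n%:R - d%:R / 2 * (Num.ceil (n%:R / d%:R - 1 : R))%:~R)
  = (\sum_(i < n) ceildivn i.+1 d)%:R :> R.
Proof.
move=> d_gt0; have := sum_ceildivn n d_gt0.
rewrite ceilDrz ?rpredN1 // ceil_ratio // -[-1 : R]/((-1)%:~R) intrKceil intrD.
move: (\sum_(i < n) _) (ceildivn n d) => S q /(congr1 (fun k => k%:R : R)).
have -> : q%:~R = q%:R :> R by [].
rewrite !(natrD, natrM, natrX) => eq_S.
have -> : S%:R = (2 * q%:R * n%:R + d%:R * q%:R - d%:R * q%:R ^+ 2) / 2 :> R.
  by rewrite -eq_S; field.
by field.
Qed.

Theorem theorem1p1 (T : finType) (eH : rel T) (chi : nat) :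
  simple_graph eH -> (1 <= #|T|)%N -> is_chromatic_number eH chi ->
  exists r : nat, is_rho eH r /\
    let n : rat := (#|T|)%:R in
    let x : rat := chi%:R in
    ((Num.ceil (n / x))%:~R * (n - x / 2 * (Num.ceil (n / x - 1))%:~R) <= r%:R)
    /\ (r <= #|T| + num_nonedges eH)%N.
Proof.
move=> simple_eH /card_gt0P[t _] [[kap kap_proper] _].
have chi_gt0 : (0 < chi)%N by apply: leq_ltn_trans (ltn_ord (kap t)).
have upper := rho_witness_nonedges simple_eH.
have [r [[eG [simple_eG rainbow_eG]] r_min]] := exists_is_rho upper.
exists r; split; first by split=> //; exists eG.
move=> n x; rewrite {}/n {}/x; split; last exact: r_min _ upper.
rewrite sum_ceildivnE // ler_nat -[r in (_ <= r)%N]card_ord -[#|'I_r|]cardsT.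
exact: forces_rainbow_card kap_proper chi_gt0 simple_eG.1 _ _ (forces_rainbow_setT rainbow_eG).
Qed.
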